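(* Let $\Phi:\mathbb{R}^n\to(-\infty,\infty]$ be a proper lower semicontinuous convex function, and let $S\subset\mathbb{R}\times\mathbb{R}^n$ be a nonempty set with $\Phi(y)=\sup_{(\alpha,b)\in S}(\alpha+b\cdot y)$ for all $y\in\mathbb{R}^n$. Let $\psi:[0,\infty)\to[0,\infty)$ satisfy $\lim_{t\to\infty}\psi(t)/t=\infty$. Define, for $x\ge0$, $y\in\mathbb{R}^n$, $$\tilde\varphi(x,y):=\sup_{(\alpha,b)\in S}\bigl(\alpha+b\cdot y-\psi(|\alpha|+|b|)\,x\bigr).$$ Then $\tilde\varphi:[0,\infty)\times\mathbb{R}^n\to(-\infty,\infty]$ is convex and lower semicontinuous, $\tilde\varphi(0,y)=\Phi(y)$ for all $y$, $\tilde\varphi(x,y)<\infty$ for all $x>0$, $y\in\mathbb{R}^n$, $x\mapsto\tilde\varphi(x,y)$ is nonincreasing, and $\lim_{x\to0+}\tilde\varphi(x,y)=\Phi(y)$ for every $y\in\mathbb{R}^n$.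
   Context: A convex function is proper if it is not identically $+\infty$. $|\cdot|$ denotes the absolute value on $\mathbb{R}$ and the Euclidean norm on $\mathbb{R}^n$. *)

From HB Require Import structures.
From mathcomp Require Import all_boot all_order all_algebra.
From mathcomp Require Import all_classical all_reals all_analysis.
Set Implicit Arguments. Unset Strict Implicit. Unset Printing Implicit Defensive.
Import Order.TTheory GRing.Theory Num.Theory.
Import numFieldNormedType.Exports.
Local Open Scope classical_set_scope.
Local Open Scope ring_scope.

Definition dotv (R : realType) (n : nat) (b y : 'rV[R]_n) : R :=
  \sum_(i < n) b ord0 i * y ord0 i.

Definition enorm (R : realType) (n : nat) (b : 'rV[R]_n) : R :=
  Num.sqrt (\sum_(i < n) b ord0 i ^+ 2).

(* convexity of an extended-real valued function (never -oo in our uses)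
   on a convex set D of a real vector space *)
Definition econvex_on (R : realType) (V : lmodType R) (D : set V)
    (f : V -> \bar R) : Prop :=
  forall x y (t : R), D x -> D y -> 0 < t -> t < 1 ->
    (f (t *: x + (1 - t) *: y)%R <= t%:E * f x + (1 - t)%:E * f y)%E.

Definition lsc_on (T : topologicalType) (R : realType) (D : set T)
    (f : T -> \bar R) : Prop :=
  forall x (a : R), D x -> (a%:E < f x)%E ->
    \forall z \near x, D z -> (a%:E < f z)%E.

Definition phi_tilde (R : realType) (n : nat) (S : set (R * 'rV[R]_n))
    (psi : R -> R) (p : R * 'rV[R]_n) : \bar R :=
  ereal_sup [set ((s.1 + dotv s.2 p.2 - psi (`|s.1| + enorm s.2) * p.1)%:E)
             | s in S].

From HB Require Import structures.
From mathcomp Require Import all_boot all_order all_algebra.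
From mathcomp Require Import all_classical all_reals all_analysis.
From mathcomp Require Import ring lra.
Set Implicit Arguments.
Unset Strict Implicit.
Unset Printing Implicit Defensive.

(* tilde-phi is the supremum over S of the affine functions
   (x, y) |-> a + b.y - psi(|a| + |b|) x, which are nonincreasing in x and
   reduce to a + b.y at x = 0; convexity, lower semicontinuity, monotonicity and
   the value at 0 are therefore inherited from the family.  For x > 0 the
   supremum is finite because a + b.y <= C (|a| + |b|) with C depending on y
   only, while superlinearity makes C t - psi(t) x bounded above in t.  As
   x -> 0+, the nonincreasing function converges to its supremum over x > 0,
   which is its value at 0 since each member of the family is continuous. *)

Import Order.TTheory GRing.Theory Num.Theory.
Import numFieldNormedType.Exports.
Local Open Scope classical_set_scope.
Local Open Scope ring_scope.

Section dot_product.
Variables (R : realType) (n : nat).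
Implicit Types (b y : 'rV[R]_n).

Lemma dotvDZr b (t : R) u v : dotv b (t *: u + v) = t * dotv b u + dotv b v.
Proof.
rewrite /dotv mulr_sumr -big_split /=; apply: eq_bigr => i _.
by rewrite !mxE mulrDr mulrCA.
Qed.

Lemma dotv0r b : dotv b 0 = 0.
Proof. by rewrite /dotv big1 // => i _; rewrite mxE mulr0. Qed.

Lemma enorm_ge0 b : 0 <= enorm b.
Proof. exact: sqrtr_ge0. Qed.

Lemma normr_coord_le_enorm b i : `|b ord0 i| <= enorm b.
Proof.
rewrite /enorm -(sqrtr_sqr (b ord0 i)) ler_sqrt; last first.
  by apply: sumr_ge0 => j _; exact: sqr_ge0.
by rewrite (bigD1 i) //= lerDl; apply: sumr_ge0 => j _; exact: sqr_ge0.
Qed.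

Lemma dotv_le b y : dotv b y <= enorm b * \sum_(i < n) `|y ord0 i|.
Proof.
rewrite /dotv mulr_sumr; apply: ler_sum => i _.
apply: le_trans (ler_norm _) _; rewrite normrM.
by apply: ler_wpM2r => //; exact: normr_coord_le_enorm.
Qed.

Lemma affine_le_norm (a : R) b y :
  a + dotv b y <= (1 + \sum_(i < n) `|y ord0 i|) * (`|a| + enorm b).
Proof.
have := ler_norm a; have := dotv_le b y; have := enorm_ge0 b.
have : 0 <= \sum_(i < n) `|y ord0 i| by apply: sumr_ge0.
have : 0 <= `|a| by [].
nra.
Qed.

End dot_product.

Lemma superlinear_bounded (R : realType) (psi : R -> R) (C x : R) :
  (forall t, 0 <= t -> 0 <= psi t) -> psi t / t @[t --> +oo] --> +oo ->
  0 <= C -> 0 < x -> exists K, forall t, 0 <= t -> C * t - psi t * x <= K.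
Proof.
move=> psi_ge0 /cvgryPge /(_ (C / x)) [M [_ psi_ge]] C0 x0.
exists (C * Num.max M 0) => t t0.
have psix0 : 0 <= psi t * x by apply: mulr_ge0; [exact: psi_ge0 | exact: ltW].
have K0 : 0 <= C * Num.max M 0 by rewrite mulr_ge0 // le_max lexx orbT.
have [tM|] := lerP t (Num.max M 0).
  have : C * t <= C * Num.max M 0 by rewrite ler_wpM2l.
  lra.
rewrite gt_max => /andP[/psi_ge Ct t_gt0].
have : C / x * (t * x) <= psi t / t * (t * x).
  by rewrite ler_wpM2r // mulr_ge0 // ltW.
have -> : C / x * (t * x) = C * t by field; rewrite gt_eqF.
have -> : psi t / t * (t * x) = psi t * x by field; rewrite gt_eqF.
lra.
Qed.

Section esup_family.
Variables (R : realType) (I : Type) (A : set I).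

Definition esup_family {T : Type} (f : I -> T -> R) (x : T) : \bar R :=
  ereal_sup [set (f i x)%:E | i in A].

Lemma esup_family_ge {T : Type} (f : I -> T -> R) i x :
  A i -> ((f i x)%:E <= esup_family f x)%E.
Proof. by move=> Ai; apply: ereal_sup_ubound; exists i. Qed.

Lemma esup_family_neqNy {T : Type} (f : I -> T -> R) x :
  A !=set0 -> esup_family f x != -oo%E.
Proof.
move=> [i Ai]; rewrite gt_eqF //.
exact: lt_le_trans (ltNyr _) (esup_family_ge f x Ai).
Qed.

Lemma le_esup_family {T : Type} (f : I -> T -> R) x x' :
  (forall i, A i -> f i x <= f i x') ->
  (esup_family f x <= esup_family f x')%E.
Proof.
move=> le_f; apply: ge_ereal_sup => _ [i Ai <-].
by apply: le_trans (esup_family_ge f x' Ai); rewrite lee_fin le_f.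
Qed.

Lemma econvex_on_esup_family {V : lmodType R} (D : set V) (f : I -> V -> R) :
  (forall i x y t, A i -> f i (t *: x + (1 - t) *: y) = t * f i x + (1 - t) * f i y) ->
  econvex_on D (esup_family f).
Proof.
move=> f_affine x y t _ _ t_gt0 t_lt1; apply: ge_ereal_sup => _ [i Ai <-].
rewrite f_affine // EFinD !EFinM.
by apply: leeD; apply: lee_wpmul2l;
  rewrite ?lee_fin ?subr_ge0 ?(ltW t_gt0) ?(ltW t_lt1) //; exact: esup_family_ge.
Qed.

Lemma lsc_on_esup_family {T : topologicalType} (D : set T) (f : I -> T -> R) :
  (forall i, A i -> continuous (f i)) -> lsc_on D (esup_family f).
Proof.
move=> f_cont x r _ /ereal_sup_gt [_ [i Ai <-]]; rewrite lte_fin => r_lt.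
have /cvgr_gt /(_ r r_lt) := f_cont i Ai x; apply: filterS => z r_lt_fz _.
by apply: lt_le_trans (esup_family_ge f z Ai); rewrite lte_fin.
Qed.

Lemma cvg_esup_family_at_right (f : I -> R -> R) (a : R) :
  (forall i x1 x2, A i -> a <= x1 -> x1 <= x2 -> f i x2 <= f i x1) ->
  (forall i, A i -> f i x @[x --> a^'+] --> f i a) ->
  esup_family f x @[x --> a^'+] --> esup_family f a.
Proof.
move=> f_anti f_cvg.
have sup_anti x1 x2 : a <= x1 -> x1 <= x2 ->
    (esup_family f x2 <= esup_family f x1)%E.
  by move=> ax1 x12; apply: le_esup_family => i Ai; exact: f_anti.
have := @nonincreasing_at_right_cvge R (esup_family f) a (BInfty _ false) erefl.
have /[swap]/[apply] : {in Interval (BRight a) (BInfty _ false) &,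
    nonincreasing_fun (esup_family f)}.
  by move=> u v; rewrite !in_itv /= !andbT => au _ uv; apply: sup_anti => //; exact: ltW.
set M := ereal_sup _; suff -> : M = esup_family f a by [].
apply/eqP; rewrite eq_le; apply/andP; split.
  apply: ge_ereal_sup => _ [x /= ax <-]; rewrite in_itv /= andbT in ax.
  by apply: sup_anti => //; exact: ltW.
apply: ge_ereal_sup => _ [i Ai <-].
have fiE : (f i x)%:E @[x --> a^'+] --> (f i a)%:E.
  by apply: cvg_EFin; [exact: nearW | exact: f_cvg].
apply: (cvge_to_le fiE).
near=> x; apply: le_trans (esup_family_ge f x Ai) _.
apply: ereal_sup_ubound; exists x => //=; rewrite in_itv /= andbT.
by near: x; exact: nbhs_right_gt.
Unshelve. all: by end_near.
Qed.

End esup_family.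

Section tilted_affine.
Variables (R : realType) (n : nat) (psi : R -> R).
Implicit Types (s p q : R * 'rV[R]_n) (y : 'rV[R]_n).

Definition tilted_affine s p : R :=
  s.1 + dotv s.2 p.2 - psi (`|s.1| + enorm s.2) * p.1.

Lemma phi_tildeE S : phi_tilde S psi = esup_family S tilted_affine.
Proof. by []. Qed.

Lemma tilted_affine_convex_comb s p q (t : R) :
  tilted_affine s (t *: p + (1 - t) *: q) =
    t * tilted_affine s p + (1 - t) * tilted_affine s q.
Proof.
rewrite /tilted_affine /= dotvDZr -[(1 - t) *: q.2]addr0 dotvDZr dotv0r.
rewrite -[t *: p.1]/(t * p.1) -[(1 - t) *: q.1]/((1 - t) * q.1).
ring.
Qed.

Lemma continuous_tilted_affine s : continuous (tilted_affine s).
Proof.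
move=> p; apply: cvgB; first apply: cvgD; first exact: cvg_cst.
  apply: (@cvg_big R _ +%R 0 xpredT add_continuous) => // i _.
  apply: cvgM; first exact: cvg_cst.
  apply: (@cvg_comp _ _ _ snd (fun M : 'rV[R]_n => M ord0 i) _ (nbhs p.2)).
    exact: cvg_snd.
  exact: coord_continuous.
by apply: cvgM; [exact: cvg_cst | exact: cvg_fst].
Qed.

Lemma cvg_tilted_affine_at_right s y (a : R) :
  tilted_affine s (x, y) @[x --> a^'+] --> tilted_affine s (a, y).
Proof.
apply: cvg_at_right_filter; rewrite /tilted_affine /=.
apply: cvgB; [exact: cvg_cst | exact: cvgM (cvg_cst _) cvg_id].
Qed.

Lemma tilted_affine0 s y : tilted_affine s (0, y) = s.1 + dotv s.2 y.
Proof. by rewrite /tilted_affine mulr0 subr0. Qed.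

Hypothesis psi_ge0 : forall t, 0 <= t -> 0 <= psi t.

Lemma tilted_affine_antitone s y x1 x2 :
  x1 <= x2 -> tilted_affine s (x2, y) <= tilted_affine s (x1, y).
Proof. by move=> x12; rewrite lerD2l lerN2 ler_wpM2l ?psi_ge0 ?addr_ge0 ?enorm_ge0. Qed.

Hypothesis psi_superlinear : psi t / t @[t --> +oo] --> +oo.

Lemma tilted_affine_bounded x y :
  0 < x -> exists K, forall s, tilted_affine s (x, y) <= K.
Proof.
move=> x_gt0; pose C := 1 + \sum_(i < n) `|y ord0 i|.
have C_ge0 : 0 <= C by rewrite addr_ge0 ?sumr_ge0.
have [K HK] := superlinear_bounded psi_ge0 psi_superlinear C_ge0 x_gt0.
exists K => s; apply: le_trans (HK _ (addr_ge0 (normr_ge0 s.1) (enorm_ge0 s.2))).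
by rewrite /tilted_affine lerD2r affine_le_norm.
Qed.

End tilted_affine.

Theorem mainTheorem6 (R : realType) (n : nat) (Phi : 'rV[R]_n -> \bar R)
  (S : set (R * 'rV[R]_n)) (psi : R -> R) :
  (* Phi : R^n -> (-oo, +oo], proper, lsc, convex *)
  (forall y, Phi y != -oo%E) ->
  (exists y, (Phi y < +oo)%E) ->
  lower_semicontinuous Phi ->
  econvex_on setT Phi ->
  (* S nonempty, Phi = sup of affine functions from S *)
  S !=set0 ->
  (forall y, Phi y = ereal_sup [set ((s.1 + dotv s.2 y)%:E) | s in S]) ->
  (* psi : [0,oo) -> [0,oo) superlinear *)
  (forall t, 0 <= t -> 0 <= psi t) ->
  (psi t / t @[t --> +oo] --> +oo) ->
  let D := [set p : R * 'rV[R]_n | 0 <= p.1] in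
  (forall p, D p -> phi_tilde S psi p != -oo%E) /\
      econvex_on D (phi_tilde S psi) /\
      lsc_on D (phi_tilde S psi) /\
      (forall y, phi_tilde S psi (0, y) = Phi y) /\
      (forall x y, 0 < x -> (phi_tilde S psi (x, y) < +oo)%E) /\
      (forall y x1 x2, 0 <= x1 -> x1 <= x2 ->
          (phi_tilde S psi (x2, y) <= phi_tilde S psi (x1, y))%E) /\
      (forall y, phi_tilde S psi (x, y) @[x --> 0^'+] --> Phi y).
Proof.
move=> _ _ _ _ S_neq0 PhiE psi_ge0 psi_superlinear D; rewrite phi_tildeE.
have phi_tilde0 y : esup_family S (tilted_affine psi) (0, y) = Phi y.
  rewrite PhiE /esup_family; congr ereal_sup.
  by apply: eq_imagel => s _; rewrite tilted_affine0.
split; first by move=> p _; exact: esup_family_neqNy.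
split; first by apply: econvex_on_esup_family => s p q t _; exact: tilted_affine_convex_comb.
split; first by apply: lsc_on_esup_family => s _; exact: continuous_tilted_affine.
split; first exact: phi_tilde0.
split.
  move=> x y x_gt0.
  have [K HK] := tilted_affine_bounded psi_ge0 psi_superlinear y x_gt0.
  by apply: le_lt_trans (ltry K); apply: ge_ereal_sup => _ [s _ <-]; exact: HK.
split.
  by move=> y x1 x2 _ x12; apply: le_esup_family => s _; exact: tilted_affine_antitone.
move=> y; rewrite -phi_tilde0.
apply: (cvg_esup_family_at_right (f := fun s x => tilted_affine psi s (x, y))).
  by move=> s x1 x2 _ _; exact: tilted_affine_antitone.
by move=> s _; exact: cvg_tilted_affine_at_right.
Qed.
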